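(* Consider a POMDP with finite state, action and observation sets $\mathcal{S},\mathcal{A},O$, known cost $C:\mathcal{S}\times\mathcal{A}\to[0,1]$, known observation kernel $\eta$, and unknown transition kernel $\theta_*\in\Theta\subseteq\Theta_H$ drawn from a prior $f$, and let $(\theta_k,t_k,T_k,K_T)$ be generated by the PSRL-POMDP algorithm run for $T$ steps. Then $$R_T\le H\,\mathbb{E}_{\theta_*}[K_T]+R_1+R_2+R_3,$$ where $$R_1:=\mathbb{E}_{\theta_*}\Big[\sum_{k=1}^{K_T}T_k\big(J(\theta_k)-J(\theta_* )\big)\Big],$$ $$R_2:=H\,\mathbb{E}_{\theta_*}\Big[\sum_{k=1}^{K_T}\sum_{t=t_k}^{t_{k+1}-1}\Big(\sum_{s'}\big|\theta_*(s'\mid s_t,a_t)-\theta_k(s'\mid s_t,a_t)\big|+\sum_s\big|h_t(s;\theta_* )-h_t(s;\theta_k)\big|\Big)\Big],$$ $$R_3:=\mathbb{E}_{\theta_*}\Big[\sum_{k=1}^{K_T}\sum_{t=t_k}^{t_{k+1}-1}\big(c(h_t(\cdot;\theta_* ),a_t)-c(h_t(\cdot;\theta_k),a_t)\big)\Big].$$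
   Context: Notation: $\Delta_{\mathcal{X}}$ is the set of distributions on $\mathcal{X}$; $c(b,a):=\sum_sC(s,a)b(s)$; $P(o\mid b,a;\theta):=\sum_{s',s}\eta(o\mid s')\theta(s'\mid s,a)b(s)$; $\tau(b,a,o;\theta)(s'):=\frac{\sum_s\eta(o\mid s')\theta(s'\mid s,a)b(s)}{\sum_{s'',s}\eta(o\mid s'')\theta(s''\mid s,a)b(s)}$. $\Theta_H$ is the set of transition kernels $\theta$ for which there exist $J(\theta)\in\mathbb{R}$ and a bounded $v(\cdot;\theta):\Delta_{\mathcal{S}}\to\mathbb{R}$ with $\inf_b v(b;\theta)=0$, $\sup_b v(b;\theta)\le H$, satisfying for all $b$: $J(\theta)+v(b;\theta)=\min_a\{c(b,a)+\sum_oP(o\mid b,a;\theta)v(\tau(b,a,o;\theta);\theta)\}$; $\pi^*(b;\theta)$ denotes a minimizer of the right-hand side. Dynamics: $s_1\sim h(\cdot;\theta_* )$, $o_t\sim\eta(\cdot\mid s_t)$, $s_{t+1}\sim\theta_*(\cdot\mid s_t,a_t)$, cost $C(s_t,a_t)$ (unobserved). $\mathcal{F}_t$ is the sigma-algebra generated by $a_1,o_1,\dots,a_{t-1},o_t$. For each $\theta\in\Theta$, $h_t(s;\theta)=\Pr(s_t=s\mid\mathcal{F}_t;\theta)$, computed by $h_1(s;\theta)\propto\eta(o_1\mid s)h(s;\theta)$ and $h_{t+1}(\cdot;\theta)=\tau(h_t(\cdot;\theta),a_t,o_{t+1};\theta)$; $f_t$ is the posterior of $\theta_*$ given $\mathcal{F}_t$.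 PSRL-POMDP proceeds in episodes $k=1,2,\dots$ starting at times $t_1=1<t_2<\cdots$ (stopping times determined by the observed history); at $t_k$ it samples $\theta_k\sim f_{t_k}$ and for $t_k\le t<t_{k+1}$ plays $a_t=\pi^*(h_t(\cdot;\theta_k);\theta_k)$. $K_T$ is the number of episodes started by time $T$, $t_k:=T+1$ for $k>K_T$, and $T_k:=t_{k+1}-t_k$. $\mathbb{E}_{\theta_*}[\cdot]:=\mathbb{E}[\cdot\mid\theta_*]$, and the regret is $R_T:=\mathbb{E}_{\theta_*}\big[\sum_{t=1}^T(C(s_t,a_t)-J(\theta_* ))\big]$. *)

From HB Require Import structures.
From mathcomp Require Import all_boot all_order all_algebra.
From mathcomp Require Import all_classical all_reals all_analysis.
Set Implicit Arguments. Unset Strict Implicit. Unset Printing Implicit Defensive.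
Import Order.TTheory GRing.Theory Num.Theory.
Local Open Scope ring_scope.

Section POMDP.
Variables (R : realType) (S A Ob : finType).

Definition simplex (X : finType) (b : X -> R) : Prop :=
  (forall x, 0 <= b x) /\ \sum_(x : X) b x = 1.

Definition cb (C : S -> A -> R) (b : S -> R) (a : A) : R :=
  \sum_(s : S) C s a * b s.

Definition Pobs (eta : S -> Ob -> R) (th : S -> A -> S -> R)
  (b : S -> R) (a : A) (o : Ob) : R :=
  \sum_(s' : S) \sum_(s : S) eta s' o * th s a s' * b s.

(** tau(b,a,o;theta); when the normaliser P(o|b,a;theta) vanishes (the paper's
    ratio is undefined) we keep the current belief b. *)
Definition tau (eta : S -> Ob -> R) (th : S -> A -> S -> R)
  (b : S -> R) (a : A) (o : Ob) : S -> R :=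
  fun s' => if Pobs eta th b a o == 0 then b s'
            else (\sum_(s : S) eta s' o * th s a s' * b s) / Pobs eta th b a o.

Definition init_lik (eta : S -> Ob -> R) (h : S -> R) (o : Ob) : R :=
  \sum_(s : S) eta s o * h s.

Definition belief1 (eta : S -> Ob -> R) (h : S -> R) (o : Ob) : S -> R :=
  fun s => if init_lik eta h o == 0 then h s else eta s o * h s / init_lik eta h o.

(** Filtering along the observed steps [(a_1,o_2); ...; (a_{t-1},o_t)]:
    returns (belief, likelihood of the observations). *)
Fixpoint filt_aux (eta : S -> Ob -> R) (th : S -> A -> S -> R)
  (b : S -> R) (l : R) (st : seq (A * Ob)) : (S -> R) * R :=
  match st with
  | [::] => (b, l)
  | (a, o) :: st' => filt_aux eta th (tau eta th b a o) (l * Pobs eta th b a o) st'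
  end.

Definition belief eta th (h : S -> R) (o1 : Ob) (st : seq (A * Ob)) : S -> R :=
  (filt_aux eta th (belief1 eta h o1) (init_lik eta h o1) st).1.

Definition lik eta th (h : S -> R) (o1 : Ob) (st : seq (A * Ob)) : R :=
  (filt_aux eta th (belief1 eta h o1) (init_lik eta h o1) st).2.

Definition Qval (C : S -> A -> R) eta th (v : (S -> R) -> R) (b : S -> R) (a : A) : R :=
  cb C b a + \sum_(o : Ob) Pobs eta th b a o * v (tau eta th b a o).

(** theta \in Theta_H with solution (J, v) and minimiser pi:
    0 = inf_b v, sup_b v <= H, and for all b in Delta_S,
    J + v(b) = min_a Q(b,a) = Q(b, pi(b)). *)
Definition bellman_sol (H : R) (C : S -> A -> R) eta th (J : R)
  (v : (S -> R) -> R) (pi : (S -> R) -> A) : Prop :=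
  [/\ forall b, simplex b -> 0 <= v b <= H,
      forall e : R, 0 < e -> exists b, simplex b /\ v b < e
    & forall b, simplex b ->
        J + v b = Qval C eta th v b (pi b) /\
        forall a, Qval C eta th v b (pi b) <= Qval C eta th v b a].

End POMDP.

Section Process.
Variables (R : realType) (S A Ob : finType).
Variables (d : measure_display) (Th : measurableType d) (prior : probability Th R).
Variables (eta : S -> Ob -> R) (ker : Th -> S -> A -> S -> R) (h0 : Th -> S -> R).
Variables (pistar : Th -> (S -> R) -> A) (ep : Ob -> seq (A * Ob) -> bool).
Variable (pstar : Th).

(** Expectation of F under the posterior f_t, whose density wrt the prior is
    proportional to the likelihood L (falls back to the prior if the
    normaliser vanishes). *)
Definition post_expect (L : Th -> R) (F : Th -> R) : R :=
  let Z := fine (\int[prior]_p (L p)%:E)%E in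
  if Z == 0 then fine (\int[prior]_p (F p)%:E)%E
  else fine (\int[prior]_p (L p * F p)%:E)%E / Z.

(** Per-step quantity g t newep o1 st s_t theta_k a_t. *)
Definition stepfun := nat -> bool -> Ob -> seq (A * Ob) -> S -> Th -> A -> R.

(** Val g n o1 st s pc: conditional expectation (given theta_star = pstar) of the
    sum of g over the next n steps, when the observed history is
    (o1, st) (time t = size st + 1), the hidden state is s_t = s, and the
    current episode's sample is pc.  At t = 1 and whenever the stopping rule
    ep fires, a new episode starts and theta_k is sampled from the posterior. *)
Fixpoint Val (g : stepfun) (n : nat) (o1 : Ob) (st : seq (A * Ob)) (s : S) (pc : Th)
  {struct n} : R :=
  match n with
  | 0 => 0
  | n'.+1 =>
    let newep := if st is [::] then true else ep o1 st in
    let step := fun p : Th =>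
      let a := pistar p (belief eta (ker p) (h0 p) o1 st) in
      g (size st).+1 newep o1 st s p a +
      \sum_(s' : S) ker pstar s a s' *
         \sum_(o : Ob) eta s' o * Val g n' o1 (rcons st (a, o)) s' p in
    if newep then post_expect (fun p => lik eta (ker p) (h0 p) o1 st) step
    else step pc
  end.

(** E_{theta_star}[ sum_{t=1}^T g_t ] with s_1 ~ h(.;theta_star), o_1 ~ eta(.|s_1). *)
Definition Exp (T : nat) (g : stepfun) : R :=
  \sum_(s : S) h0 pstar s * \sum_(o : Ob) eta s o * Val g T o [::] s pstar.

End Process.

Section Summands.
Variables (R : realType) (S A Ob : finType).
Variables (d : measure_display) (Th : measurableType d).
Variables (C : S -> A -> R) (eta : S -> Ob -> R) (ker : Th -> S -> A -> S -> R)
  (h0 : Th -> S -> R) (J : Th -> R) (H : R) (pstar : Th).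

Definition g_regret : stepfun R S A Ob Th :=
  fun _ _ _ _ s _ a => C s a - J pstar.
Definition g_episode : stepfun R S A Ob Th :=
  fun _ newep _ _ _ _ _ => if newep then 1 else 0.
Definition g_R1 : stepfun R S A Ob Th :=
  fun _ _ _ _ _ p _ => J p - J pstar.
Definition g_R2 : stepfun R S A Ob Th :=
  fun _ _ o1 st s p a =>
    H * (\sum_(s' : S) `|ker pstar s a s' - ker p s a s'|
         + \sum_(x : S) `|belief eta (ker pstar) (h0 pstar) o1 st x
                          - belief eta (ker p) (h0 p) o1 st x|).
Definition g_R3 : stepfun R S A Ob Th :=
  fun _ _ o1 st _ p a =>
    cb C (belief eta (ker pstar) (h0 pstar) o1 st) a
    - cb C (belief eta (ker p) (h0 p) o1 st) a.
End Summands.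
Arguments g_episode {R S A Ob d Th}.

(* Let [D] be the per-step summand of [H K_T + R_1 + R_2 + R_3] minus that of
   [R_T], so that the claim is [0 <= E D].  Weighting the hidden state by the
   joint probability [Pr(o_1, ..., o_t, s_t = s; theta_star)], the expected
   remaining sum of [D] is at least [- Pr(o_1, ..., o_t; theta_star) v(h_t(.;
   theta_k); theta_k)] inside an episode and at least 0 at its start, by
   induction on the remaining horizon.  In each step the Bellman equation of
   [theta_k] turns [J(theta_k) - c(h_t(.;theta_k), a_t)] into the increment of
   [v(.;theta_k)] predicted with [theta_k] and [h_t(.;theta_k)]; since
   [0 <= v <= H], predicting it with [theta_star] and [h_t(.;theta_star)]
   instead costs at most [H] times the two L1 distances of [R_2], and the [H]
   charged at each episode start pays for the [v] left by the previous one. *)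

From Pilot Require Import Defs.
From HB Require Import structures.
From mathcomp Require Import all_boot all_order all_algebra.
From mathcomp Require Import all_classical all_reals all_analysis.
From mathcomp Require Import measurable_realfun ring lra.
Import Order.TTheory GRing.Theory Num.Theory.
Local Open Scope classical_set_scope.
Local Open Scope ring_scope.
Set Implicit Arguments. Unset Strict Implicit. Unset Printing Implicit Defensive.

Section Simplex.
Variable R : realType.
Implicit Types (X : finType).

Lemma simplex_le1 X (b : X -> R) x : simplex b -> 0 <= b x <= 1.
Proof.
case=> b_ge0 <-; rewrite b_ge0 /= (bigD1 x) //= lerDl.
by apply: sumr_ge0 => y _; exact: b_ge0.
Qed.

Lemma simplex_mean_bound X (b f : X -> R) (M : R) :
  simplex b -> (forall x, 0 <= f x <= M) -> 0 <= \sum_x b x * f x <= M.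
Proof.
case=> b_ge0 b_sum1 f_bnd; apply/andP; split.
  by apply: sumr_ge0 => x _; rewrite mulr_ge0 // (andP (f_bnd x)).1.
rewrite -[leRHS]mul1r -b_sum1 mulr_suml; apply: ler_sum => x _.
by rewrite ler_wpM2l // (andP (f_bnd x)).2.
Qed.

Lemma sum_mul_le_norm X (x f : X -> R) (M : R) :
  (forall i, 0 <= f i <= M) -> \sum_i x i * f i <= M * \sum_i `|x i|.
Proof.
move=> f_bnd; rewrite mulr_sumr; apply: ler_sum => i _.
have /andP[f0 fM] := f_bnd i.
rewrite (le_trans (ler_wpM2r f0 (ler_norm (x i)))) // mulrC.
by rewrite ler_wpM2r.
Qed.

(* [tau] and [belief1] are, by definition, instances of [renormalize]. *)
Definition renormalize X (b u : X -> R) : X -> R :=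
  fun x => if \sum_y u y == 0 then b x else u x / \sum_y u y.

Lemma renormalize_simplex X (b u : X -> R) :
  simplex b -> (forall x, 0 <= u x) -> simplex (renormalize b u).
Proof.
move=> b_simplex u_ge0; rewrite /renormalize; case: eqP => // Z_neq0.
have Z_gt0 : 0 < \sum_y u y.
  by rewrite lt_neqAle eq_sym; apply/andP; split; [apply/eqP|exact: sumr_ge0].
split; first by move=> x; rewrite divr_ge0 // ltW.
by rewrite -mulr_suml mulfV //; apply/eqP.
Qed.

Lemma sum_mul_renormalize X (b u : X -> R) x : (forall y, 0 <= u y) ->
  (\sum_y u y) * renormalize b u x = u x.
Proof.
move=> u_ge0; rewrite /renormalize; case: eqP => [Z0|Z_neq0].
  have /eqP := Z0; rewrite psumr_eq0 // => /allP/(_ x (mem_index_enum x))/eqP->.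
  by rewrite Z0 mul0r.
by rewrite mulrC divfK //; apply/eqP.
Qed.

End Simplex.

Section Filtering.
Variables (R : realType) (S A Ob : finType).
Variables (eta : S -> Ob -> R) (th : S -> A -> S -> R).
Hypotheses (eta_simplex : forall s, simplex (eta s))
  (th_simplex : forall s a, simplex (th s a)).

Let eta_ge0 s o : 0 <= eta s o. Proof. by case: (eta_simplex s). Qed.
Let th_ge0 s a s' : 0 <= th s a s'. Proof. by case: (th_simplex s a). Qed.

Definition unnormalized_update (b : S -> R) a o : S -> R :=
  fun s' => \sum_s eta s' o * th s a s' * b s.

Lemma unnormalized_update_ge0 b a o s' : (forall s, 0 <= b s) ->
  0 <= unnormalized_update b a o s'.
Proof. by move=> b_ge0; apply: sumr_ge0 => s _; rewrite !mulr_ge0. Qed.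

Lemma sum_Pobs b a : \sum_o Pobs eta th b a o = \sum_s b s.
Proof.
rewrite /Pobs exchange_big /=.
under eq_bigr => s' _ do rewrite exchange_big /=.
rewrite exchange_big /=; apply: eq_bigr => s _.
under eq_bigr => s' _ do rewrite -!mulr_suml (proj2 (eta_simplex s')) mul1r.
by rewrite -mulr_suml (proj2 (th_simplex s a)) mul1r.
Qed.

Lemma Pobs_simplex b a : simplex b -> simplex (Pobs eta th b a).
Proof.
case=> b_ge0 b_sum1; split; last by rewrite sum_Pobs.
by move=> o; apply: sumr_ge0 => s' _; exact: unnormalized_update_ge0.
Qed.

Lemma tau_simplex b a o : simplex b -> simplex (tau eta th b a o).
Proof.
move=> b_simplex; apply: renormalize_simplex => // s'.
by apply: unnormalized_update_ge0; case: b_simplex.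
Qed.

Lemma Pobs_mul_tau b a o s' : (forall s, 0 <= b s) ->
  Pobs eta th b a o * tau eta th b a o s' = unnormalized_update b a o s'.
Proof.
by move=> b_ge0; apply: sum_mul_renormalize => y; exact: unnormalized_update_ge0.
Qed.

Lemma filt_aux_rcons b l st a o :
  filt_aux eta th b l (rcons st (a, o)) =
  (tau eta th (filt_aux eta th b l st).1 a o,
   (filt_aux eta th b l st).2 * Pobs eta th (filt_aux eta th b l st).1 a o).
Proof. by elim: st b l => [|[a' o'] st IH] b l /=. Qed.

Lemma filt_aux_invariant b l st : simplex b -> 0 <= l <= 1 ->
  simplex (filt_aux eta th b l st).1 /\ 0 <= (filt_aux eta th b l st).2 <= 1.
Proof.
elim: st b l => [|[a o] st IH] b l b_simplex /andP[l_ge0 l_le1] //=.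
have /andP[P_ge0 P_le1] := simplex_le1 o (Pobs_simplex a b_simplex).
apply: IH; first exact: tau_simplex.
by rewrite mulr_ge0 //= mulr_ile1.
Qed.

Variable h : S -> R.
Hypothesis h_simplex : simplex h.

Lemma filt_aux_init_invariant o1 st :
  simplex (belief eta th h o1 st) /\ 0 <= lik eta th h o1 st <= 1.
Proof.
have eh_ge0 s : 0 <= eta s o1 * h s by rewrite mulr_ge0 // (proj1 h_simplex).
apply: filt_aux_invariant; first exact: renormalize_simplex.
rewrite /init_lik; under eq_bigr do rewrite mulrC.
exact: simplex_mean_bound h_simplex (fun s => simplex_le1 o1 (eta_simplex s)).
Qed.

Lemma belief_simplex o1 st : simplex (belief eta th h o1 st).
Proof. exact: (filt_aux_init_invariant o1 st).1. Qed.

Lemma lik_bound o1 st : 0 <= lik eta th h o1 st <= 1.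
Proof. exact: (filt_aux_init_invariant o1 st).2. Qed.

Lemma belief_rcons o1 st a o :
  belief eta th h o1 (rcons st (a, o)) = tau eta th (belief eta th h o1 st) a o.
Proof. by rewrite /belief filt_aux_rcons. Qed.

Lemma lik_rcons o1 st a o : lik eta th h o1 (rcons st (a, o)) =
  lik eta th h o1 st * Pobs eta th (belief eta th h o1 st) a o.
Proof. by rewrite /lik filt_aux_rcons. Qed.

Lemma lik_mul_belief_rcons o1 st a o s' :
  lik eta th h o1 (rcons st (a, o)) * belief eta th h o1 (rcons st (a, o)) s' =
  \sum_s eta s' o * th s a s' * (lik eta th h o1 st * belief eta th h o1 st s).
Proof.
rewrite lik_rcons belief_rcons -mulrA Pobs_mul_tau; last first.
  by case: (belief_simplex o1 st).
by rewrite mulr_sumr; apply: eq_bigr => s _; ring.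
Qed.

Lemma lik_mul_belief_nil o s :
  lik eta th h o [::] * belief eta th h o [::] s = eta s o * h s.
Proof.
apply: sum_mul_renormalize => s'.
by rewrite mulr_ge0 // (proj1 h_simplex).
Qed.

End Filtering.

Lemma measurable_inv (R : realType) : measurable_fun [set: R] (@GRing.inv R).
Proof.
have -> : [set: R] = [set x | x != 0] `|` [set 0].
  by apply/seteqP; split => x //= _; case: (eqVneq x 0) => [->|]; [right|left].
apply/measurable_funU.
- by apply: open_measurable; exact: open_neq.
- by apply: closed_measurable; exact: closed_eq.
split; last exact: measurable_fun_set1.
apply: open_continuous_measurable_fun; first exact: open_neq.
by move=> x; rewrite inE => /inv_continuous.
Qed.

Section BoundedMeasurable.
Variables (R : realType) (d : measure_display) (Th : measurableType d).
Implicit Types f g : Th -> R.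

Definition bounded_measurable f :=
  measurable_fun [set: Th] f /\ exists M, forall p, `|f p| <= M.

Lemma bounded_measurable_cst k : bounded_measurable (fun=> k).
Proof. by split; [exact: measurable_cst|exists `|k|]. Qed.

Lemma bounded_measurable01 f : measurable_fun [set: Th] f ->
  (forall p, 0 <= f p <= 1) -> bounded_measurable f.
Proof.
by move=> mf f01; split => //; exists 1 => p; have /andP[f0 f1] := f01 p; rewrite ger0_norm.
Qed.

Lemma bounded_measurableD f g : bounded_measurable f -> bounded_measurable g ->
  bounded_measurable (fun p => f p + g p).
Proof.
move=> [mf [M1 fM1]] [mg [M2 gM2]]; split; first exact: measurable_funD.
by exists (M1 + M2) => p; rewrite (le_trans (ler_normD _ _)) // lerD.
Qed.

Lemma bounded_measurableM f g : bounded_measurable f -> bounded_measurable g ->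
  bounded_measurable (fun p => f p * g p).
Proof.
move=> [mf [M1 fM1]] [mg [M2 gM2]]; split; first exact: measurable_funM.
by exists (M1 * M2) => p; rewrite normrM ler_pM.
Qed.

Lemma bounded_measurableB f g : bounded_measurable f -> bounded_measurable g ->
  bounded_measurable (fun p => f p - g p).
Proof.
move=> [mf [M1 fM1]] [mg [M2 gM2]]; split; first exact: measurable_funB.
by exists (M1 + M2) => p; rewrite (le_trans (ler_normB _ _)) // lerD.
Qed.

Lemma bounded_measurable_norm f : bounded_measurable f ->
  bounded_measurable (fun p => `|f p|).
Proof.
move=> [mf [M fM]]; split; last by exists M => p; rewrite normr_id.
by apply: measurableT_comp mf; exact: normr_measurable.
Qed.

Lemma bounded_measurable_sum (I : Type) (r : seq I) (P : pred I) (F : I -> Th -> R) :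
  (forall i, bounded_measurable (F i)) ->
  bounded_measurable (fun p => \sum_(i <- r | P i) F i p).
Proof.
move=> mF; elim: r => [|i r IH].
  by under eq_fun do rewrite big_nil; exact: bounded_measurable_cst.
under eq_fun do rewrite big_cons.
by case: (P i) => //; exact: bounded_measurableD.
Qed.

Lemma bounded_measurable_index (I : finType) (i_ : Th -> I) (F : Th -> I -> R) :
  (forall i, measurable [set p | i_ p = i]) -> (forall i, bounded_measurable (F ^~ i)) ->
  bounded_measurable (fun p => F p (i_ p)).
Proof.
move=> mi mF; have -> : (fun p => F p (i_ p)) =
    (fun p => \sum_i (if i_ p == i then F p i else 0)).
  apply: funext => p; rewrite (bigD1 (i_ p)) //= eqxx big1 ?addr0 // => i.
  by rewrite eq_sym => /negPf ->.
apply: bounded_measurable_sum => i; split.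
  apply: measurable_fun_ifT; last 2 first.
  - by case: (mF i).
  - exact: measurable_cst.
  apply: (measurable_fun_bool true); rewrite setTI.
  by rewrite (_ : _ @^-1` _ = [set p | i_ p = i]) //; apply/seteqP; split => p /eqP.
have [M FM] := (mF i).2; exists (`|M|) => p.
by case: eqP => _; rewrite ?normr0 // (le_trans (FM p)) // ler_norm.
Qed.

Lemma measurable_renormalize (X : finType) (b u : Th -> X -> R) x :
  (forall y, measurable_fun [set: Th] (b ^~ y)) ->
  (forall y, measurable_fun [set: Th] (u ^~ y)) ->
  measurable_fun [set: Th] (fun p => renormalize (b p) (u p) x).
Proof.
move=> mb mu; have mZ : measurable_fun [set: Th] (fun p => \sum_y u p y).
  exact: measurable_sum.
apply: measurable_fun_ifT => //; first exact: measurable_fun_eqr mZ (measurable_cst _).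
by apply: measurable_funM => //; exact: measurableT_comp (@measurable_inv R) mZ.
Qed.

Variable prior : probability Th R.

Lemma bounded_measurable_integrable f : bounded_measurable f ->
  prior.-integrable [set: Th] (EFin \o f).
Proof.
move=> [mf [M fM]].
apply: (le_integrable measurableT _ _ (finite_measure_integrable_cst prior M measurableT)).
- exact/measurable_EFinP.
- by move=> p _ /=; rewrite lee_fin (le_trans (fM p)) // ler_norm.
Qed.

Lemma fine_integralZl k f : bounded_measurable f ->
  fine (\int[prior]_p (k * f p)%:E)%E = k * fine (\int[prior]_p (f p)%:E)%E.
Proof.
move=> bf; have intf := bounded_measurable_integrable bf.
rewrite (eq_integral (fun p => k%:E * (f p)%:E)%E) // integralZl //.
by rewrite fineM // integrable_fin_num.
Qed.

Lemma fine_integral_lin k1 f k2 g : bounded_measurable f -> bounded_measurable g ->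
  fine (\int[prior]_p (k1 * f p + k2 * g p)%:E)%E =
  k1 * fine (\int[prior]_p (f p)%:E)%E + k2 * fine (\int[prior]_p (g p)%:E)%E.
Proof.
move=> bf bg; have bkf := bounded_measurableM (bounded_measurable_cst k1) bf.
have bkg := bounded_measurableM (bounded_measurable_cst k2) bg.
rewrite -fine_integralZl // -fine_integralZl //.
rewrite (eq_integral ((EFin \o (fun p => k1 * f p)%R) \+ (EFin \o (fun p => k2 * g p)%R))%E) //.
rewrite integralD_EFin //; try exact: bounded_measurable_integrable.
by rewrite fineD // integrable_fin_num //; exact: bounded_measurable_integrable.
Qed.

Lemma post_expect_lin L k1 f k2 g : bounded_measurable L ->
  bounded_measurable f -> bounded_measurable g ->
  post_expect prior L (fun p => k1 * f p + k2 * g p) =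
  k1 * post_expect prior L f + k2 * post_expect prior L g.
Proof.
move=> bL bf bg; rewrite /post_expect; case: ifP => _; first exact: fine_integral_lin.
have distr p : L p * (k1 * f p + k2 * g p) = k1 * (L p * f p) + k2 * (L p * g p).
  by ring.
under eq_integral => p _ do rewrite distr.
by rewrite fine_integral_lin ?mulrDl ?mulrA //; exact: bounded_measurableM.
Qed.

Lemma post_expect0 L : post_expect prior L (fun=> 0) = 0.
Proof.
by rewrite /post_expect; case: ifP => _; rewrite integral0_eq ?mul0r // => p _;
  rewrite ?mulr0.
Qed.

Lemma post_expect_sum L (I : Type) (r : seq I) (w : I -> R) (F : I -> Th -> R) :
  bounded_measurable L -> (forall i, bounded_measurable (F i)) ->
  post_expect prior L (fun p => \sum_(i <- r) w i * F i p) =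
  \sum_(i <- r) w i * post_expect prior L (F i).
Proof.
move=> bL bF; elim: r => [|i r IH].
  by under eq_fun do rewrite big_nil; rewrite big_nil post_expect0.
under eq_fun do rewrite big_cons -[X in _ + X]mul1r.
rewrite post_expect_lin // ?IH ?big_cons ?mul1r //.
by apply: bounded_measurable_sum => j; exact: bounded_measurableM (bounded_measurable_cst _) _.
Qed.

Lemma post_expect_ge0 L f : (forall p, 0 <= L p) -> (forall p, 0 <= f p) ->
  0 <= post_expect prior L f.
Proof.
move=> L_ge0 f_ge0; rewrite /post_expect.
by case: ifP => _; rewrite ?divr_ge0 // fine_ge0 // integral_ge0 // => p _;
  rewrite lee_fin ?mulr_ge0.
Qed.

End BoundedMeasurable.

Section MeasurableFiltering.
Variables (R : realType) (S A Ob : finType) (d : measure_display) (Th : measurableType d).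
Variables (eta : S -> Ob -> R) (th : Th -> S -> A -> S -> R) (h : Th -> S -> R).
Hypotheses (mth : forall s a s', measurable_fun [set: Th] (fun p => th p s a s'))
  (mh : forall s, measurable_fun [set: Th] (fun p => h p s)).

Lemma measurable_unnormalized_update (b : Th -> S -> R) a o s' :
  (forall s, measurable_fun [set: Th] (b ^~ s)) ->
  measurable_fun [set: Th] (fun p => unnormalized_update eta (th p) (b p) a o s').
Proof.
move=> mb; apply: measurable_sum => s.
by apply: measurable_funM => //; apply: measurable_funM => //; exact: measurable_cst.
Qed.

Lemma measurable_filt_aux st (b : Th -> S -> R) (l : Th -> R) :
  (forall s, measurable_fun [set: Th] (b ^~ s)) -> measurable_fun [set: Th] l ->
  (forall s, measurable_fun [set: Th] (fun p => (filt_aux eta (th p) (b p) (l p) st).1 s)) /\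
  measurable_fun [set: Th] (fun p => (filt_aux eta (th p) (b p) (l p) st).2).
Proof.
elim: st b l => [|[a o] st IH] b l mb ml //=; apply: IH => [s|].
  by apply: measurable_renormalize => // y; exact: measurable_unnormalized_update.
apply: measurable_funM => //; apply: measurable_sum => s'.
exact: measurable_unnormalized_update.
Qed.

Lemma measurable_belief_lik o1 st :
  (forall s, measurable_fun [set: Th] (fun p => belief eta (th p) (h p) o1 st s)) /\
  measurable_fun [set: Th] (fun p => lik eta (th p) (h p) o1 st).
Proof.
have meh s : measurable_fun [set: Th] (fun p => eta s o1 * h p s).
  by apply: measurable_funM => //; exact: measurable_cst.
apply: measurable_filt_aux; last exact: measurable_sum.
by move=> s; apply: measurable_renormalize.
Qed.

End MeasurableFiltering.

Lemma sum_mul_sum_lin (R : comRingType) (I J : finType) (a : I -> R) (b x y : I -> J -> R)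
    k1 k2 :
  \sum_i a i * \sum_j b i j * (k1 * x i j + k2 * y i j) =
  k1 * \sum_i a i * \sum_j b i j * x i j + k2 * \sum_i a i * \sum_j b i j * y i j.
Proof.
rewrite !mulr_sumr -big_split /=; apply: eq_bigr => i _.
rewrite !mulr_sumr -big_split /=; apply: eq_bigr => j _; ring.
Qed.

Section ObservationDeviation.
Variables (R : realType) (S A Ob : finType) (eta : S -> Ob -> R).
Hypothesis eta_simplex : forall s, simplex (eta s).

Lemma Pobs_mean (th : S -> A -> S -> R) b a (w : Ob -> R) :
  \sum_o Pobs eta th b a o * w o = \sum_s b s * \sum_s' th s a s' * \sum_o eta s' o * w o.
Proof.
under eq_bigr do rewrite /Pobs mulr_suml; under eq_bigr do under eq_bigr do rewrite mulr_suml.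
rewrite exchange_big /=; under eq_bigr do rewrite exchange_big /=.
rewrite exchange_big /=; apply: eq_bigr => s _; rewrite mulr_sumr.
apply: eq_bigr => s' _; rewrite !mulr_sumr; apply: eq_bigr => o _; ring.
Qed.

Lemma Pobs_mean_deviation (th1 th2 : S -> A -> S -> R) (b1 b2 : S -> R) a (w : Ob -> R) H :
  (forall o, 0 <= w o <= H) -> (forall s, 0 <= b1 s) -> (forall s, simplex (th2 s a)) ->
  \sum_o Pobs eta th1 b1 a o * w o - \sum_o Pobs eta th2 b2 a o * w o <=
  H * (\sum_s b1 s * \sum_s' `|th1 s a s' - th2 s a s'| + \sum_s `|b1 s - b2 s|).
Proof.
move=> w_bnd b1_ge0 th2_simplex; rewrite !Pobs_mean.
set f := fun s' => \sum_o eta s' o * w o.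
have f_bnd s' : 0 <= f s' <= H := simplex_mean_bound (eta_simplex s') w_bnd.
set g1 := fun s => \sum_s' th1 s a s' * f s'.
set g2 := fun s => \sum_s' th2 s a s' * f s'.
rewrite -sumrB (eq_bigr (fun s => b1 s * (g1 s - g2 s) + (b1 s - b2 s) * g2 s)) => [|s _];
  last by rewrite /g1 /g2; ring.
rewrite big_split mulrDr /=; apply: lerD.
  rewrite mulr_sumr; apply: ler_sum => s _; rewrite mulrCA ler_wpM2l //.
  rewrite /g1 /g2 -sumrB (eq_bigr (fun s' => (th1 s a s' - th2 s a s') * f s')) => [|s' _].
    exact: sum_mul_le_norm.
  by rewrite mulrBl.
by apply: sum_mul_le_norm => s; exact: simplex_mean_bound.
Qed.

End ObservationDeviation.

Section PSRL.
Variables (R : realType) (S A Ob : finType) (d : measure_display) (Th : measurableType d).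
Variables (prior : probability Th R) (C : S -> A -> R) (eta : S -> Ob -> R)
  (ker : Th -> S -> A -> S -> R) (h0 : Th -> S -> R) (H : R) (J : Th -> R)
  (v : Th -> (S -> R) -> R) (pistar : Th -> (S -> R) -> A)
  (ep : Ob -> seq (A * Ob) -> bool) (pstar : Th).
Hypotheses (C_bound : forall s a, 0 <= C s a <= 1)
  (eta_simplex : forall s, simplex (eta s))
  (ker_simplex : forall p s a, simplex (ker p s a)) (h0_simplex : forall p, simplex (h0 p))
  (bellman : forall p, bellman_sol H C eta (ker p) (J p) (v p) (pistar p))
  (mker : forall s a s', measurable_fun [set: Th] (fun p => ker p s a s'))
  (mh0 : forall s, measurable_fun [set: Th] (fun p => h0 p s))
  (mJ : measurable_fun [set: Th] J)
  (mpi : forall b : Th -> S -> R, (forall s, measurable_fun [set: Th] (fun p => b p s)) ->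
     forall a, measurable [set p | pistar p (b p) = a]).

Local Notation bel p := (belief eta (ker p) (h0 p)).
Local Notation lk p := (lik eta (ker p) (h0 p)).
Local Notation Val := (Val prior eta ker h0 pistar ep pstar).
Local Notation Exp := (Exp prior eta ker h0 pistar ep pstar).
Local Notation stepfun := (stepfun R S A Ob Th).

Let bel_simplex p o1 st : simplex (bel p o1 st).
Proof. exact: belief_simplex. Qed.

Let lik_ge0 p o1 st : 0 <= lk p o1 st.
Proof. by case/andP: (lik_bound eta_simplex (ker_simplex p) (h0_simplex p) o1 st). Qed.

Definition episode_start (o1 : Ob) (st : seq (A * Ob)) :=
  if st is [::] then true else ep o1 st.

Definition act p o1 st := pistar p (bel p o1 st).

Definition step_value (g : stepfun) n o1 st s p :=
  g (size st).+1 (episode_start o1 st) o1 st s p (act p o1 st) +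
  \sum_s' ker pstar s (act p o1 st) s' *
    \sum_o eta s' o * Val g n o1 (rcons st (act p o1 st, o)) s' p.

Lemma ValS g n o1 st s pc : Val g n.+1 o1 st s pc =
  if episode_start o1 st then post_expect prior (fun p => lk p o1 st) (step_value g n o1 st s)
  else step_value g n o1 st s pc.
Proof. by []. Qed.

Lemma bounded_measurable_ker s a s' : bounded_measurable (fun p => ker p s a s').
Proof. by apply: bounded_measurable01 => // p; exact: simplex_le1. Qed.

Lemma bounded_measurable_belief o1 st s : bounded_measurable (fun p => bel p o1 st s).
Proof.
apply: bounded_measurable01; first exact: (measurable_belief_lik eta mker mh0 o1 st).1.
by move=> p; exact: simplex_le1.
Qed.

Lemma bounded_measurable_lik o1 st : bounded_measurable (fun p => lk p o1 st).
Proof.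
apply: bounded_measurable01; first exact: (measurable_belief_lik eta mker mh0 o1 st).2.
by move=> p; exact: lik_bound.
Qed.

Definition bounded_stepfun (g : stepfun) :=
  forall t b o1 st s a, bounded_measurable (fun p => g t b o1 st s p a).

Lemma bounded_measurable_step_value g n o1 st s : bounded_stepfun g ->
  (forall st s, bounded_measurable (Val g n o1 st s)) ->
  bounded_measurable (step_value g n o1 st s).
Proof.
move=> bg bVal; rewrite /step_value.
apply: (@bounded_measurable_index _ _ _ _ (fun p => act p o1 st)
  (fun p a => g (size st).+1 (episode_start o1 st) o1 st s p a +
     \sum_s' ker pstar s a s' * \sum_o eta s' o * Val g n o1 (rcons st (a, o)) s' p)).
  by move=> a; apply: mpi => s'; exact: (measurable_belief_lik eta mker mh0 o1 st).1.
move=> a; apply: bounded_measurableD => //.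
apply: bounded_measurable_sum => s'; apply: bounded_measurableM => //.
  exact: bounded_measurable_cst.
apply: bounded_measurable_sum => o.
by apply: bounded_measurableM; [exact: bounded_measurable_cst|exact: bVal].
Qed.

Lemma bounded_measurable_Val g n o1 st s : bounded_stepfun g ->
  bounded_measurable (Val g n o1 st s).
Proof.
move=> bg; elim: n o1 st s => [|n IH] o1 st s; first exact: bounded_measurable_cst.
have -> : Val g n.+1 o1 st s = fun pc =>
    if episode_start o1 st then post_expect prior (fun p => lk p o1 st) (step_value g n o1 st s)
    else step_value g n o1 st s pc.
  by apply: funext => pc; rewrite ValS.
case: episode_start; first exact: bounded_measurable_cst.
exact: bounded_measurable_step_value.
Qed.

Definition stepfun_lin k1 (g1 : stepfun) k2 (g2 : stepfun) : stepfun :=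
  fun t b o1 st s p a => k1 * g1 t b o1 st s p a + k2 * g2 t b o1 st s p a.

Lemma bounded_stepfun_lin k1 g1 k2 g2 : bounded_stepfun g1 -> bounded_stepfun g2 ->
  bounded_stepfun (stepfun_lin k1 g1 k2 g2).
Proof.
move=> bg1 bg2 t b o1 st s a.
by apply: bounded_measurableD; apply: bounded_measurableM => //;
  exact: bounded_measurable_cst.
Qed.

Lemma Val_lin k1 g1 k2 g2 n o1 st s pc : bounded_stepfun g1 -> bounded_stepfun g2 ->
  Val (stepfun_lin k1 g1 k2 g2) n o1 st s pc =
  k1 * Val g1 n o1 st s pc + k2 * Val g2 n o1 st s pc.
Proof.
move=> bg1 bg2; elim: n o1 st s pc => [|n IH] o1 st s pc.
  by rewrite /= !mulr0 addr0.
have step_lin : step_value (stepfun_lin k1 g1 k2 g2) n o1 st s =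
    fun p => k1 * step_value g1 n o1 st s p + k2 * step_value g2 n o1 st s p.
  apply: funext => p; rewrite /step_value.
  under eq_bigr do under eq_bigr do rewrite IH.
  by rewrite sum_mul_sum_lin /stepfun_lin; ring.
rewrite !ValS step_lin; case: episode_start => //.
apply: post_expect_lin; first exact: bounded_measurable_lik.
  by apply: bounded_measurable_step_value => // *; exact: bounded_measurable_Val.
by apply: bounded_measurable_step_value => // *; exact: bounded_measurable_Val.
Qed.

Lemma Exp_lin T k1 g1 k2 g2 : bounded_stepfun g1 -> bounded_stepfun g2 ->
  Exp T (stepfun_lin k1 g1 k2 g2) = k1 * Exp T g1 + k2 * Exp T g2.
Proof.
move=> bg1 bg2; rewrite /Defs.Exp.
under eq_bigr do under eq_bigr do rewrite Val_lin //.
exact: sum_mul_sum_lin.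
Qed.

Lemma v_bound p b : simplex b -> 0 <= v p b <= H.
Proof. by case: (bellman p) => v_bnd _ _; exact: v_bnd. Qed.

Lemma cb_bound b a : simplex b -> 0 <= cb C b a <= 1.
Proof.
move=> b_simplex; rewrite /cb; under eq_bigr do rewrite mulrC.
exact: simplex_mean_bound (C_bound ^~ a).
Qed.

Lemma J_bound p : `|J p| <= 1 + H + H.
Proof.
have [_ _ /(_ _ (h0_simplex p))[bellman_eq _]] := bellman p.
set a := pistar p (h0 p) in bellman_eq.
have /andP[c0 c1] := cb_bound a (h0_simplex p).
have /andP[v0 v1] := v_bound p (h0_simplex p).
have /andP[e0 e1] :
    0 <= \sum_o Pobs eta (ker p) (h0 p) a o * v p (tau eta (ker p) (h0 p) a o) <= H.
  apply: simplex_mean_bound; first exact: Pobs_simplex.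
  by move=> o; apply: v_bound; exact: tau_simplex.
rewrite /Qval in bellman_eq.
rewrite ler_norml; apply/andP; split; lra.
Qed.

Lemma bounded_stepfun_regret : bounded_stepfun (g_regret C J pstar).
Proof. by move=> *; exact: bounded_measurable_cst. Qed.

Lemma bounded_stepfun_episode : bounded_stepfun g_episode.
Proof. by move=> *; exact: bounded_measurable_cst. Qed.

Lemma bounded_stepfun_R1 : bounded_stepfun (g_R1 J pstar).
Proof.
move=> *; apply: bounded_measurableB; last exact: bounded_measurable_cst.
by split=> //; exists (1 + H + H); exact: J_bound.
Qed.

Lemma bounded_stepfun_R2 : bounded_stepfun (g_R2 eta ker h0 H pstar).
Proof.
move=> t b o1 st s a; apply: bounded_measurableM; first exact: bounded_measurable_cst.
apply: bounded_measurableD; apply: bounded_measurable_sum => x;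
  apply: bounded_measurable_norm; apply: bounded_measurableB;
  by [exact: bounded_measurable_cst|exact: bounded_measurable_ker
     |exact: bounded_measurable_belief].
Qed.

Lemma bounded_stepfun_R3 : bounded_stepfun (g_R3 C eta ker h0 pstar).
Proof.
move=> t b o1 st s a; apply: bounded_measurableB; first exact: bounded_measurable_cst.
apply: bounded_measurable_sum => x; apply: bounded_measurableM;
  by [exact: bounded_measurable_cst|exact: bounded_measurable_belief].
Qed.

Definition regret_gap : stepfun :=
  stepfun_lin 1 (stepfun_lin H g_episode 1 (g_R1 J pstar)) 1
    (stepfun_lin 1 (g_R2 eta ker h0 H pstar) 1
      (stepfun_lin 1 (g_R3 C eta ker h0 pstar) (-1) (g_regret C J pstar))).

Lemma bounded_stepfun_regret_gap : bounded_stepfun regret_gap.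
Proof.
repeat apply: bounded_stepfun_lin; by [exact: bounded_stepfun_regret
  |exact: bounded_stepfun_episode|exact: bounded_stepfun_R1|exact: bounded_stepfun_R2
  |exact: bounded_stepfun_R3].
Qed.

Lemma Exp_regret_gap T : Exp T regret_gap =
  H * Exp T g_episode + Exp T (g_R1 J pstar) + Exp T (g_R2 eta ker h0 H pstar)
  + Exp T (g_R3 C eta ker h0 pstar) - Exp T (g_regret C J pstar).
Proof.
have b_regret := bounded_stepfun_regret; have b_episode := bounded_stepfun_episode.
have b_R1 := bounded_stepfun_R1; have b_R2 := bounded_stepfun_R2.
have b_R3 := bounded_stepfun_R3.
rewrite /regret_gap !Exp_lin; first by ring.
all: by do ?apply: bounded_stepfun_lin.
Qed.

(* [Pr(o_1, ..., o_t, s_t = s; theta_star)] given the actions [a_1, ..., a_(t-1)] *)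
Definition joint o1 st s := lk pstar o1 st * bel pstar o1 st s.

Lemma joint_continuation o1 st a (V : Ob -> S -> R) :
  \sum_s joint o1 st s * (\sum_s' ker pstar s a s' * \sum_o eta s' o * V o s') =
  \sum_o \sum_s' joint o1 (rcons st (a, o)) s' * V o s'.
Proof.
transitivity (\sum_s \sum_s' \sum_o joint o1 st s * ker pstar s a s' * eta s' o * V o s').
  apply: eq_bigr => s _; rewrite mulr_sumr; apply: eq_bigr => s' _.
  by rewrite !mulr_sumr; apply: eq_bigr => o _; ring.
rewrite exchange_big /=; under eq_bigr do rewrite exchange_big /=.
rewrite exchange_big /=; apply: eq_bigr => o _; apply: eq_bigr => s' _.
rewrite /joint lik_mul_belief_rcons // mulr_suml; apply: eq_bigr => s _; ring.
Qed.

Lemma joint_regret_gap t b o1 st p a :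
  \sum_s joint o1 st s * regret_gap t b o1 st s p a =
  lk pstar o1 st * (H * (if b then 1 else 0) + J p - cb C (bel p o1 st) a +
    H * (\sum_s bel pstar o1 st s * \sum_s' `|ker pstar s a s' - ker p s a s'|
         + \sum_x `|bel pstar o1 st x - bel p o1 st x|)).
Proof.
have [_ bs_sum1] := bel_simplex pstar o1 st.
rewrite /joint /regret_gap /stepfun_lin /g_episode /g_R1 /g_R2 /g_R3 /g_regret.
set bs := bel pstar o1 st; set e : R := if b then 1 else 0.
set K := H * e + J p - cb C (bel p o1 st) a
  + H * \sum_x `|bs x - bel p o1 st x| + cb C bs a.
rewrite (eq_bigr (fun s => lk pstar o1 st * (bs s * K
    + H * (bs s * \sum_s' `|ker pstar s a s' - ker p s a s'|) - C s a * bs s))) => [|s _];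
  last by rewrite /K; ring.
rewrite -mulr_sumr sumrB big_split /= -mulr_suml bs_sum1 -mulr_sumr /K /cb.
ring.
Qed.

Definition future_gap n o1 st pc := \sum_s joint o1 st s * Val regret_gap n o1 st s pc.

Definition gap_floor o1 st pc :=
  if episode_start o1 st then 0 else - (lk pstar o1 st * v pc (bel pc o1 st)).

Lemma gap_floor_le0 o1 st pc : gap_floor o1 st pc <= 0.
Proof.
rewrite /gap_floor; case: episode_start => //; rewrite oppr_le0 mulr_ge0 //.
by case/andP: (v_bound pc (bel_simplex pc o1 st)).
Qed.

Lemma gap_floor_ge o1 st pc : - (lk pstar o1 st * v pc (bel pc o1 st)) <= gap_floor o1 st pc.
Proof.
rewrite /gap_floor; case: episode_start => //; rewrite oppr_le0 mulr_ge0 //.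
by case/andP: (v_bound pc (bel_simplex pc o1 st)).
Qed.

Lemma future_gap_continuation_ge n o1 st p a :
  (forall st' pc, gap_floor o1 st' pc <= future_gap n o1 st' pc) ->
  - (lk pstar o1 st * \sum_o Pobs eta (ker pstar) (bel pstar o1 st) a o
                          * v p (tau eta (ker p) (bel p o1 st) a o))
  <= \sum_o future_gap n o1 (rcons st (a, o)) p.
Proof.
move=> IH; rewrite mulr_sumr -sumrN; apply: ler_sum => o _.
rewrite mulrA -lik_rcons // -belief_rcons //.
exact: le_trans (gap_floor_ge _ _ _) (IH _ _).
Qed.

Lemma step_gap_ge n o1 st p :
  (forall st' pc, gap_floor o1 st' pc <= future_gap n o1 st' pc) ->
  lk pstar o1 st * (H * (if episode_start o1 st then 1 else 0) - v p (bel p o1 st))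
  <= \sum_s joint o1 st s * step_value regret_gap n o1 st s p.
Proof.
move=> IH; rewrite /step_value; set a := act p o1 st.
under eq_bigr do rewrite mulrDr; rewrite big_split /= joint_regret_gap joint_continuation.
have cont := @future_gap_continuation_ge n o1 st p a IH.
have [_ _ /(_ _ (bel_simplex p o1 st))[bellman_eq _]] := bellman p.
rewrite /Qval -[pistar p _]/a in bellman_eq.
have deviation := Pobs_mean_deviation eta_simplex (ker pstar) (bel p o1 st)
  (fun o => v_bound p (tau_simplex eta_simplex (ker_simplex p) a o (bel_simplex p o1 st)))
  (proj1 (bel_simplex pstar o1 st)) (ker_simplex p ^~ a).
apply: le_trans (lerD (lexx _) cont); rewrite -mulrN -mulrDr ler_wpM2l //.
set e : R := if _ then _ else _; lra.
Qed.

Lemma future_gap_ge n o1 st pc : gap_floor o1 st pc <= future_gap n o1 st pc.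
Proof.
elim: n st pc => [|n IH] st pc.
  rewrite /future_gap big1 => [|s _]; last by rewrite mulr0.
  exact: gap_floor_le0.
have step_ge := @step_gap_ge n o1 st ^~ IH.
rewrite /future_gap /gap_floor; under eq_bigr do rewrite ValS.
case: episode_start step_ge => step_ge; last first.
  by apply: le_trans (step_ge pc); rewrite mulr0 sub0r mulrN.
rewrite -post_expect_sum; first last.
- move=> s; apply: bounded_measurable_step_value; first exact: bounded_stepfun_regret_gap.
  by move=> *; apply: bounded_measurable_Val; exact: bounded_stepfun_regret_gap.
- exact: bounded_measurable_lik.
apply: post_expect_ge0 => // p; apply: le_trans (step_ge p).
by rewrite mulr1 mulr_ge0 // subr_ge0; case/andP: (v_bound p (bel_simplex p o1 st)).
Qed.

Lemma Exp_regret_gap_ge0 T : 0 <= Exp T regret_gap.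
Proof.
have -> : Exp T regret_gap = \sum_o future_gap T o [::] pstar.
  rewrite /Defs.Exp; under eq_bigr do rewrite mulr_sumr; rewrite exchange_big /=.
  apply: eq_bigr => o _; apply: eq_bigr => s _.
  by rewrite /joint lik_mul_belief_nil // mulrA [_ * eta _ _]mulrC.
by apply: sumr_ge0 => o _; exact: (future_gap_ge T o [::] pstar).
Qed.

End PSRL.

Theorem lemma2 (R : realType) (S A Ob : finType)
  (d : measure_display) (Th : measurableType d) (prior : probability Th R)
  (C : S -> A -> R) (eta : S -> Ob -> R)
  (ker : Th -> S -> A -> S -> R) (h0 : Th -> S -> R)
  (H : R) (J : Th -> R) (v : Th -> (S -> R) -> R) (pistar : Th -> (S -> R) -> A)
  (ep : Ob -> seq (A * Ob) -> bool) (T : nat) (pstar : Th) :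
  (forall s a, 0 <= C s a <= 1) ->
  (forall s, simplex (eta s)) ->
  (forall p s a, simplex (ker p s a)) ->
  (forall p, simplex (h0 p)) ->
  (forall p, bellman_sol H C eta (ker p) (J p) (v p) (pistar p)) ->
  (forall s a s', measurable_fun setT (fun p => ker p s a s')) ->
  (forall s, measurable_fun setT (fun p => h0 p s)) ->
  measurable_fun setT J ->
  (forall b : Th -> S -> R, (forall s, measurable_fun setT (fun p => b p s)) ->
     forall a, measurable [set p | pistar p (b p) = a]) ->
  let E := Exp prior eta ker h0 pistar ep pstar T in
  E (g_regret C J pstar)
  <= H * E g_episode
     + E (g_R1 J pstar)
     + E (g_R2 eta ker h0 H pstar)
     + E (g_R3 C eta ker h0 pstar).
Proof.
move=> C_bound eta_simplex ker_simplex h0_simplex bellman mker mh0 mJ mpi /=.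
have gap_ge0 := Exp_regret_gap_ge0 prior ep pstar C_bound eta_simplex ker_simplex
  h0_simplex bellman mker mh0 mJ mpi T.
have gapE := Exp_regret_gap prior ep pstar C_bound eta_simplex ker_simplex
  h0_simplex bellman mker mh0 mJ mpi T.
by rewrite gapE in gap_ge0; lra.
Qed.
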